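(* For every integer $n\ge 2$ and every real $x$, $$W^{(1)}_{n}(x)=(-2)^{n-1}\,n\,(n-2)!\,\sin^{n}(x)\,W^{(1)}_{n-1}(x).$$
   Context: For smooth functions $f_1,\dots,f_n$ of a real variable $x$, $\mathrm{Wr}\{f_1,\dots,f_n\}$ denotes the determinant of the $n\times n$ matrix with $(i,j)$ entry $f_j^{(i-1)}(x)$. Define $W^{(1)}_1(x):=\sin(2x)$ and, for $n\ge2$, $W^{(1)}_n(x):=\mathrm{Wr}\{\sin(x),\sin(2x),\dots,\sin((n-1)x),\sin((n+1)x)\}$. *)

From mathcomp Require Import all_boot all_order all_algebra.
From mathcomp Require Import all_classical all_reals all_analysis.
Set Implicit Arguments. Unset Strict Implicit. Unset Printing Implicit Defensive.
Import Order.TTheory GRing.Theory Num.Theory.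
Local Open Scope ring_scope.

Definition Wr {R : realType} (n : nat) (f : 'I_n -> R -> R) (x : R) : R :=
  \det (\matrix_(i < n, j < n) derive1n i (f j) x).

(* Frequencies 1, 2, ..., n-1, n+1  (0-based index j : 'I_n). *)
Definition freq1 (n : nat) (j : nat) : nat := if (j.+1 < n)%N then j.+1 else n.+1.

Definition W1 {R : realType} (n : nat) (x : R) : R :=
  if n is 1 then sin (2 * x)
  else Wr (fun (j : 'I_n) (t : R) => sin ((freq1 n j)%:R * t)) x.

(* Since sin (k x) = sin x * U_(k-1)(cos x) for the Chebyshev polynomials U,
   every function in W_n is a polynomial in sin x and cos x, and on such
   polynomials d/dx is the derivation cos x * d/dS - sin x * d/dC, so the
   Wronskian can be computed formally.  Pulling sin x out of each column gives
   sin^n x; as U_(k-1) has degree k - 1 and leading coefficient 2^(k-1), a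
   triangular change of columns replaces U_(f-1)(cos x) by cos^(f-1) x for the
   frequencies f = 1, ..., n-1, n+1, at the cost of a power of 2.  The first of
   the functions cos^0, cos^1, ..., cos^(n-2), cos^n is constant, so that
   Wronskian is the one of the derivatives -e sin x cos^(e-1) x, which is
   (-1)^(n-1) n (n-2)! sin^(n-1) x times the same Wronskian one size smaller. *)

From HB Require Import structures.
From mathcomp Require Import all_boot all_order all_algebra.
From mathcomp Require Import all_classical all_reals all_analysis.
From mathcomp Require Import ring zify.
Import Order.TTheory GRing.Theory Num.Theory.
Local Open Scope ring_scope.

Section Wronskian.
Context {A : comPzRingType} (D : {additive A -> A}).
Hypothesis DM : forall a b, D (a * b) = D a * b + a * D b.

Lemma derivation1 : D 1 = 0.
Proof.
have D11 := DM 1 1; rewrite !mulr1 mul1r in D11.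
by apply: (addrI (D 1)); rewrite addr0 -D11.
Qed.

Lemma derivationX a k : D (a ^+ k.+1) = a ^+ k * D a *+ k.+1.
Proof.
elim: k => [|k IH]; first by rewrite expr1 expr0 mul1r.
by rewrite exprS DM IH [_ ^+ k.+1]exprS; ring.
Qed.

Lemma iter_derivation0 k : iter k D 0 = 0.
Proof. by elim: k => //= k ->; rewrite raddf0. Qed.

Lemma iter_derivation_sum (I : Type) (r : seq I) (F : I -> A) k :
  iter k D (\sum_(i <- r) F i) = \sum_(i <- r) iter k D (F i).
Proof. by elim: k => //= k ->; rewrite raddf_sum. Qed.

Lemma iter_derivationMl c a k : D c = 0 -> iter k D (c * a) = c * iter k D a.
Proof. by move=> Dc; elim: k => //= k ->; rewrite DM Dc mul0r add0r. Qed.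

Lemma iter_derivationM n a b i : (i < n)%N ->
  iter i D (a * b) = \sum_(k < n) (iter (i - k) D a * iter k D b) *+ 'C(i, k).
Proof.
case: n => [//|N]; elim: i => [|i IH] lt_iN.
  by rewrite big_ord_recl big1 ?addr0 // => k _; rewrite bin0n mulr0n.
rewrite iterS IH 1?ltnW // raddf_sum.
under eq_bigr => k _ do rewrite raddfMn DM mulrnDl.
rewrite big_split /=.
have -> : \sum_(k < N.+1) (D (iter (i - k) D a) * iter k D b) *+ 'C(i, k) =
          \sum_(k < N.+1) (iter (i.+1 - k) D a * iter k D b) *+ 'C(i, k).
  apply: eq_bigr => k _; case: (leqP k i) => [le_ki | lt_ik].
    by rewrite subSn.
  by rewrite bin_small ?mulr0n.
rewrite [in RHS]big_ord_recl [X in X + _]big_ord_recl [X in _ + X]big_ord_recr /=.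
rewrite (@bin_small i N) // mulr0n addr0 !bin0.
have bump0 k : bump 0 k = k.+1 by [].
under [in RHS]eq_bigr => k _ do rewrite bump0 binS mulrnDr.
under eq_bigr => k _ do rewrite bump0.
by rewrite big_split addrA.
Qed.

Definition wronskian {n} (f : 'I_n -> A) : A :=
  \det (\matrix_(i < n, j < n) iter i D (f j)).

Lemma wronskianMl n a (f : 'I_n -> A) :
  wronskian (fun j => a * f j) = a ^+ n * wronskian f.
Proof.
pose L := \matrix_(i < n, k < n) (iter (i - k) D a *+ 'C(i, k)).
rewrite /wronskian.
have -> : \matrix_(i < n, j < n) iter i D (a * f j) =
          L *m \matrix_(i < n, j < n) iter i D (f j).
  apply/matrixP => i j; rewrite !mxE (@iter_derivationM n a (f j) i (ltn_ord i)).
  by apply: eq_bigr => k _; rewrite !mxE mulrnAl.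
rewrite det_mulmx det_trig; last first.
  apply/forallP => i; apply/forallP => k; apply/implyP => lt_ik.
  by rewrite mxE bin_small ?mulr0n.
congr (_ * _); rewrite -[n in a ^+ n]card_ord -prodr_const.
by apply: eq_bigr => i _; rewrite mxE subnn binn.
Qed.

Lemma wronskian_mulmx n (T : 'M[A]_n) (f : 'I_n -> A) :
  (forall l j, D (T l j) = 0) ->
  wronskian (fun j => \sum_l T l j * f l) = wronskian f * \det T.
Proof.
move=> DT; rewrite /wronskian -det_mulmx; congr (\det _).
apply/matrixP => i j; rewrite !mxE iter_derivation_sum.
by apply: eq_bigr => l _; rewrite !mxE iter_derivationMl // mulrC.
Qed.

Lemma wronskian_scale n (c f : 'I_n -> A) : (forall j, D (c j) = 0) ->
  wronskian (fun j => c j * f j) = \prod_j c j * wronskian f.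
Proof.
move=> Dc; pose T := diag_mx (\row_j c j).
have -> : (fun j => c j * f j) = (fun j => \sum_l T l j * f l).
  apply/funext => j; rewrite (bigD1 j) //= big1 ?addr0 => [|l neq_lj].
    by rewrite !mxE eqxx mulr1n.
  by rewrite !mxE (negbTE neq_lj) mulr0n mul0r.
rewrite wronskian_mulmx => [|l j]; last first.
  by rewrite !mxE; case: (l == j); rewrite ?mulr1n ?mulr0n ?raddf0.
by rewrite det_diag mulrC; congr (_ * _); apply: eq_bigr => i _; rewrite mxE.
Qed.

Lemma wronskian_lift0 n (f : 'I_n.+1 -> A) : f ord0 = 1 ->
  wronskian f = wronskian (fun j => D (f (lift ord0 j))).
Proof.
move=> f0; rewrite /wronskian (expand_det_col _ ord0) big_ord_recl big1 => [|i _].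
  rewrite addr0 !mxE f0 mul1r /cofactor /= expr0 mul1r; congr (\det _).
  by apply/matrixP => i j; rewrite !mxE lift0 iterSr.
by rewrite !mxE f0 lift0 iterSr derivation1 iter_derivation0 mul0r.
Qed.
End Wronskian.

Section Chebyshev.
Variable R : nzRingType.

(* [chebU k] is the Chebyshev polynomial of the second kind U_(k-1), with U_(-1) = 0. *)
Fixpoint chebU (k : nat) : {poly R} :=
  match k with
  | 0 => 0
  | k1.+1 => if k1 is k2.+1 then ('X * chebU k1) *+ 2 - chebU k2 else 1
  end.

Lemma chebU_SS k : chebU k.+2 = ('X * chebU k.+1) *+ 2 - chebU k.
Proof. by []. Qed.

Lemma coef_chebU_SS k d :
  (chebU k.+2)`_d = (if d is d'.+1 then (chebU k.+1)`_d' else 0) *+ 2 - (chebU k)`_d.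
Proof. by rewrite chebU_SS coefB coefMn coefXM; case: d. Qed.

Lemma size_chebU k : (size (chebU k) <= k)%N.
Proof.
elim/ltn_ind: k => -[|[|k]] IH; rewrite ?size_poly0 ?size_poly1 //.
apply/leq_sizeP => -[//|d] lt_kd; rewrite coef_chebU_SS.
have size_k1 : (size (chebU k.+1) <= d)%N by apply: leq_trans (IH _ _) _; lia.
have size_k : (size (chebU k) <= d.+1)%N by apply: leq_trans (IH _ _) _; lia.
by rewrite !nth_default // mul0rn subr0.
Qed.

Lemma coef_chebU_parity k d : ~~ odd (k + d) -> (chebU k)`_d = 0.
Proof.
elim/ltn_ind: k d => -[|[|k]] IH d; rewrite ?coef0 // => even_kd.
  by rewrite coefC; case: d even_kd.
rewrite coef_chebU_SS (IH k) //; last by move: even_kd; rewrite !addSn /= !negbK.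
case: d even_kd => [|d] even_kd; first by rewrite mul0rn subr0.
by rewrite IH // ?subr0 ?mul0rn //; move: even_kd; rewrite !addSn addnS /= negbK.
Qed.

Lemma coef_chebU_lead k : (chebU k.+1)`_k = 2 ^+ k.
Proof.
elim: k => [|k IH]; first by rewrite coefC.
by rewrite coef_chebU_SS IH nth_default ?subr0 ?exprSr ?mulr_natr // leqW ?size_chebU.
Qed.
End Chebyshev.

Lemma sin_natmul (R : realType) k (x : R) :
  sin (k%:R * x) = sin x * (chebU R k).[cos x].
Proof.
elim/ltn_ind: k => -[|[|k]] IH; first by rewrite mul0r sin0 horner0 mulr0.
  by rewrite mul1r hornerC mulr1.
have kS2x : k.+2%:R * x = k.+1%:R * x + x by rewrite mulrSr mulrDl mul1r.
have kx : k%:R * x = k.+1%:R * x - x by rewrite mulrSr mulrDl mul1r addrK.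
transitivity (cos x * sin (k.+1%:R * x) *+ 2 - sin (k%:R * x)).
  by rewrite kS2x kx sinD sinB; ring.
by rewrite !IH // chebU_SS hornerD hornerN hornerMn hornerM hornerX; ring.
Qed.

Section TrigPolynomials.
Context {R : realType}.
(* [P : trigpoly] stands for x |-> P(sin x, cos x): its coefficients are
   polynomials in sin x and its variable is cos x. *)
Local Notation trigpoly := {poly {poly R}}.

Definition sinP : trigpoly := 'X%:P.

Definition trig_eval (x : R) : trigpoly -> R :=
  horner_eval (cos x) \o map_poly (horner_eval (sin x)).

HB.instance Definition _ (x : R) := GRing.RMorphism.on (trig_eval x).

Lemma trig_eval_cos x : trig_eval x 'X = cos x.
Proof. by rewrite /trig_eval /= map_polyX horner_evalE hornerX. Qed.

Lemma trig_eval_sin x : trig_eval x sinP = sin x.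
Proof.
by rewrite /trig_eval /sinP /= map_polyC /= horner_evalE hornerC horner_evalE hornerX.
Qed.

Lemma trig_eval_const x a : trig_eval x a%:P%:P = a.
Proof. by rewrite /trig_eval /= map_polyC /= !horner_evalE !hornerC. Qed.

Lemma trig_eval_polyC x (p : {poly R}) : trig_eval x (map_poly polyC p) = p.[cos x].
Proof.
rewrite /trig_eval /= -map_poly_comp (@eq_map_poly _ _ _ idfun) => [|a].
  by rewrite map_poly_id ?horner_evalE.
by rewrite /= horner_evalE hornerC.
Qed.

Definition trig_deriv (P : trigpoly) : trigpoly := 'X * map_poly deriv P - sinP * P^`().

Lemma trig_deriv_is_zmod_morphism : zmod_morphism trig_deriv.
Proof. by move=> P Q; rewrite /trig_deriv !raddfB /=; ring. Qed.

HB.instance Definition _ :=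
  GRing.isZmodMorphism.Build trigpoly trigpoly trig_deriv trig_deriv_is_zmod_morphism.

Lemma map_poly_derivM (P Q : trigpoly) :
  map_poly deriv (P * Q) = map_poly deriv P * Q + P * map_poly deriv Q.
Proof.
apply/polyP => k; rewrite coefD !coefM coef_map coefM raddf_sum -big_split /=.
by apply: eq_bigr => j _; rewrite derivM !coef_map.
Qed.

Lemma trig_derivM (P Q : trigpoly) :
  trig_deriv (P * Q) = trig_deriv P * Q + P * trig_deriv Q.
Proof. by rewrite /trig_deriv map_poly_derivM derivM; ring. Qed.

Lemma trig_deriv_cos : trig_deriv 'X = - sinP.
Proof.
rewrite /trig_deriv derivX mulr1 (_ : map_poly deriv 'X = 0) ?mulr0 ?sub0r //.
apply/polyP => k; rewrite coef_map coefX coef0.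
by case: (_ == _); [exact: (derivC (1 : R)) | exact: raddf0].
Qed.

Lemma trig_deriv_sin : trig_deriv sinP = 'X.
Proof.
by rewrite /trig_deriv /sinP map_polyC /= derivX derivC mulr0 subr0 polyC1 mulr1.
Qed.

Lemma trig_deriv_const (a : R) : trig_deriv a%:P%:P = 0.
Proof. by rewrite /trig_deriv map_polyC /= !derivC polyC0 !mulr0 subr0. Qed.

Lemma is_derive_trig_eval (P : trigpoly) (t : R) :
  is_derive t 1 (fun u => trig_eval u P) (trig_eval t (trig_deriv P)).
Proof.
move: P t.
pose ok P := forall t : R,
  is_derive t 1 (fun u => trig_eval u P) (trig_eval t (trig_deriv P)).
have okD P Q : ok P -> ok Q -> ok (P + Q).
  move=> dP dQ t; rewrite [trig_deriv _]raddfD rmorphD.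
  have -> : (fun u => trig_eval u (P + Q)) =
            (fun u => trig_eval u P) + (fun u => trig_eval u Q).
    by apply/funext => u; rewrite rmorphD.
  exact: is_deriveD.
have okM P Q : ok P -> ok Q -> ok (P * Q).
  move=> dP dQ t; rewrite trig_derivM rmorphD !rmorphM.
  have -> : (fun u => trig_eval u (P * Q)) =
            (fun u => trig_eval u P) * (fun u => trig_eval u Q).
    by apply/funext => u; rewrite rmorphM.
  by apply: is_derive_eq; [exact: is_deriveM | rewrite /GRing.scale /= addrC mulrC].
have okC a : ok a%:P%:P.
  move=> t; rewrite trig_deriv_const rmorph0.
  have -> : (fun u => trig_eval u a%:P%:P) = cst a.
    by apply/funext => u; rewrite trig_eval_const.
  exact: is_derive_cst.
have okS : ok sinP.
  move=> t; have -> : (fun u => trig_eval u sinP) = sin.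
    by apply/funext => u; rewrite trig_eval_sin.
  by rewrite trig_deriv_sin trig_eval_cos; exact: is_derive_sin.
have okX : ok 'X.
  move=> t; have -> : (fun u => trig_eval u 'X) = cos.
    by apply/funext => u; rewrite trig_eval_cos.
  rewrite trig_deriv_cos; apply: is_derive_eq (is_derive_cos t) _.
  by rewrite rmorphN; congr (- _); exact/esym/trig_eval_sin.
have okPC (c : {poly R}) : ok c%:P.
  elim/poly_ind: c => [|c a okc]; first by have := okC 0; rewrite polyC0.
  by rewrite rmorphD rmorphM; exact: okD (okM _ _ okc okS) (okC a).
move=> P; elim/poly_ind: P => [|P c okP]; first by have := okPC 0; rewrite polyC0.
exact: okD (okM _ _ okP okX) (okPC c).
Qed.

Lemma derive1n_trig_eval (P : trigpoly) i :
  derive1n i (fun u => trig_eval u P) = fun u => trig_eval u (iter i trig_deriv P).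
Proof.
elim: i => [//|i IH]; rewrite derive1nS IH; apply/funext => u.
by rewrite derive1E; apply: derive_val; exact: is_derive_trig_eval.
Qed.

Lemma Wr_trig_eval n (g : 'I_n -> trigpoly) x :
  Wr (fun j t => trig_eval t (g j)) x = trig_eval x (wronskian trig_deriv g).
Proof.
rewrite /Wr /wronskian -det_map_mx; congr (\det _); apply/matrixP => i j.
by rewrite !mxE derive1n_trig_eval.
Qed.
End TrigPolynomials.

Lemma freq1_gt0 n j : (0 < freq1 n j)%N.
Proof. by rewrite /freq1; case: ifP. Qed.

Lemma ltn_freq1 n (i j : 'I_n) : (freq1 n i < freq1 n j)%N = (i < j)%N.
Proof.
by rewrite /freq1; case: ifP; case: ifP; have := ltn_ord i; have := ltn_ord j; lia.
Qed.

Lemma freq1_lift0 n (j : 'I_n.+1) : freq1 n.+2 (lift ord0 j) = (freq1 n.+1 j).+1.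
Proof. by rewrite /freq1 lift0 ltnS; case: ifP. Qed.

Lemma freq1_widen n (l : 'I_n) : freq1 n.+1 (widen_ord (leqnSn n) l) = l.+1.
Proof. by rewrite /freq1 /= ltnS ltn_ord. Qed.

Lemma freq1_max n : freq1 n.+1 (@ord_max n) = n.+2.
Proof. by rewrite /freq1 /= ltnn. Qed.

(* m is the exponent missing from the powers 0, ..., m - 1, m + 1 of cos in
   W_(m+1); it is also missing from U_(m+1), which has the parity of m + 1. *)
Lemma coef_chebU_freq1_gap (R : nzRingType) m (j : 'I_m.+1) :
  (chebU R (freq1 m.+1 j))`_m = 0.
Proof.
rewrite /freq1; case: ifP => [lt_jm | _].
  by rewrite nth_default // (leq_trans (size_chebU _ _)).
by rewrite coef_chebU_parity // !addSn /= negbK addnn odd_double.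
Qed.

Lemma chebU_freq1E (R : nzRingType) m (j : 'I_m.+1) :
  chebU R (freq1 m.+1 j) =
  \sum_(l < m.+1) (chebU R (freq1 m.+1 j))`_(freq1 m.+1 l).-1 *: 'X^((freq1 m.+1 l).-1).
Proof.
set p := chebU R _.
have size_p : (size p <= m.+2)%N.
  by apply: leq_trans (size_chebU _ _) _; rewrite /freq1; case: ifP; lia.
rewrite -[LHS](take_poly_id size_p) /take_poly poly_def.
rewrite [LHS]big_ord_recr [X in X + _ = _]big_ord_recr [RHS]big_ord_recr /=.
rewrite freq1_max coef_chebU_freq1_gap scale0r addr0; congr (_ + _).
by apply: eq_bigr => l _; rewrite freq1_widen.
Qed.

Definition cos_pow_wronskian (R : realType) n : {poly {poly R}} :=
  wronskian (@trig_deriv R) (fun j : 'I_n => 'X^((freq1 n j).-1)).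

Lemma W1_Wr (R : realType) n (x : R) :
  W1 n.+1 x = Wr (fun (j : 'I_n.+1) (t : R) => sin ((freq1 n.+1 j)%:R * t)) x.
Proof. by case: n => [|n] //; rewrite /W1 /Wr det_mx11 mxE. Qed.

Lemma W1_trig_eval (R : realType) n (x : R) :
  W1 n.+1 x = sin x ^+ n.+1 * trig_eval x (cos_pow_wronskian R n.+1) *
              \prod_(j < n.+1) 2 ^+ (freq1 n.+1 j).-1.
Proof.
pose T : 'M[{poly {poly R}}]_n.+1 :=
  \matrix_(l, j) ((chebU R (freq1 n.+1 j))`_(freq1 n.+1 l).-1)%:P%:P.
have sin_freq1 (j : 'I_n.+1) (t : R) : sin ((freq1 n.+1 j)%:R * t) =
    trig_eval t (sinP * \sum_l T l j * 'X^((freq1 n.+1 l).-1)).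
  rewrite sin_natmul -trig_eval_sin -trig_eval_polyC -rmorphM chebU_freq1E rmorph_sum.
  congr (trig_eval t (sinP * _)); apply: eq_bigr => l _.
  by rewrite mxE -mul_polyC rmorphM /= map_polyC map_polyXn.
have detT : \det T = (\prod_(j < n.+1) 2 ^+ (freq1 n.+1 j).-1)%:P%:P.
  rewrite -det_tr det_trig; last first.
    apply/forallP => i; apply/forallP => j; apply/implyP => lt_ij.
    rewrite !mxE nth_default ?polyC0 // (leq_trans (size_chebU _ _)) // -ltnS.
    by rewrite prednK ?freq1_gt0 // ltn_freq1.
  rewrite !rmorph_prod; apply: eq_bigr => l _.
  by rewrite !mxE -{1}(prednK (freq1_gt0 _ l)) coef_chebU_lead.
rewrite W1_Wr.
have -> : (fun (j : 'I_n.+1) (t : R) => sin ((freq1 n.+1 j)%:R * t)) =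
    (fun (j : 'I_n.+1) (t : R) =>
       trig_eval t (sinP * \sum_l T l j * 'X^((freq1 n.+1 l).-1))).
  by apply/funext => j; apply/funext => t; exact: sin_freq1.
rewrite Wr_trig_eval (wronskianMl (A := {poly {poly R}}) _ trig_derivM).
rewrite (wronskian_mulmx (A := {poly {poly R}}) _ trig_derivM) => [|l j]; last first.
  by rewrite mxE; exact: trig_deriv_const.
rewrite -/(cos_pow_wronskian R n.+1) detT.
rewrite !rmorphM rmorphXn mulrA.
by congr (_ ^+ _ * _ * _); [exact: trig_eval_sin | exact: trig_eval_const].
Qed.

Lemma cos_pow_wronskianS (R : realType) n :
  cos_pow_wronskian R n.+2 =
  (\prod_(j < n.+1) - (freq1 n.+1 j)%:R) * (sinP ^+ n.+1 * cos_pow_wronskian R n.+1).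
Proof.
rewrite /cos_pow_wronskian.
rewrite (wronskian_lift0 (A := {poly {poly R}}) _ trig_derivM); last first.
  by rewrite /freq1 /= expr0.
have -> : (fun j : 'I_n.+1 => @trig_deriv R 'X^((freq1 n.+2 (lift ord0 j)).-1)) =
    (fun j => - (freq1 n.+1 j)%:R * (sinP * 'X^((freq1 n.+1 j).-1))).
  apply/funext => j; rewrite freq1_lift0 /= -{1}(prednK (freq1_gt0 n.+1 j)).
  rewrite (derivationX (A := {poly {poly R}}) _ trig_derivM) /= trig_deriv_cos.
  rewrite prednK ?freq1_gt0 //.
  by rewrite -mulr_natl; ring.
rewrite (wronskian_scale (A := {poly {poly R}}) _ trig_derivM) => [|j].
  by rewrite (wronskianMl (A := {poly {poly R}}) _ trig_derivM).
by rewrite raddfN raddfMn derivation1 ?mul0rn ?oppr0 //; exact: trig_derivM.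
Qed.

Lemma prod_freq1 n : (\prod_(j < n.+1) freq1 n.+1 j = n`! * n.+2)%N.
Proof.
rewrite big_ord_recr /= freq1_max fact_prod big_add1 /= big_mkord; congr (_ * _)%N.
by apply: eq_bigr => j _; rewrite freq1_widen.
Qed.

Lemma prod_expr_freq1S (R : comPzSemiRingType) (c : R) n :
  \prod_(j < n.+2) c ^+ (freq1 n.+2 j).-1 =
  c ^+ n.+1 * \prod_(j < n.+1) c ^+ (freq1 n.+1 j).-1.
Proof.
rewrite big_ord_recl (_ : freq1 n.+2 ord0 = 1) // expr0 mul1r.
rewrite -[X in c ^+ X](card_ord n.+1) -prodr_const -big_split /=.
by apply: eq_bigr => j _; rewrite freq1_lift0 -exprS prednK ?freq1_gt0.
Qed.

Lemma trig_eval_cos_pow_wronskianS (R : realType) n (x : R) :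
  trig_eval x (cos_pow_wronskian R n.+2) =
  (-1) ^+ n.+1 * (n`! * n.+2)%:R * sin x ^+ n.+1 *
  trig_eval x (cos_pow_wronskian R n.+1).
Proof.
rewrite cos_pow_wronskianS prodrN card_ord -natr_prod prod_freq1 !natrM.
rewrite !rmorphM rmorph_sign !rmorph_nat rmorphXn !mulrA.
by congr (_ * _ ^+ _ * _); exact: trig_eval_sin.
Qed.

Theorem mainTheorem3 (R : realType) (n : nat) (x : R) (hn : (2 <= n)%N) :
  W1 n x = (-2) ^+ (n - 1) * n%:R * ((n - 2)`!)%:R * sin x ^+ n * W1 (n - 1) x.
Proof.
case: n hn => [|[|n]] // _; rewrite !subSS !subn0.
rewrite !W1_trig_eval trig_eval_cos_pow_wronskianS prod_expr_freq1S natrM exprS.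
have -> : (-2 : R) ^+ n.+1 = (-1) ^+ n.+1 * 2 ^+ n.+1 by rewrite -exprMn mulN1r.
ring.
Qed.
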